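(* Let $\mathbb D$ be a commutative ring with identity, and let $S\mathcal R=S\mathcal R(\mathbb D)$ be the S-Riordan group over $\mathbb D$. For $k\ge 1$ and $\alpha\in\mathbb D$ let $a_k(\alpha)=(1+\alpha t^k,\,t)\in S\mathcal R$. Then for every $\alpha\in\mathbb D$ and every integer $k\ge 2$, $a_k(\alpha)\in\gamma_2(S\mathcal R)$. Moreover, for every $n\ge 1$ and every $\alpha\in\mathbb D$ with $\alpha\neq 0$, the truncation of $a_1(\alpha)$ to $TS\mathcal R_n$ does not lie in $\gamma_2(TS\mathcal R_n)$.
   Context: For a commutative ring $\mathbb D$ with identity, the Riordan group $\mathcal R(\mathbb D)$ consists of pairs $(g,f)$ of formal power series $g=\sum_{k\ge0}g_kt^k$, $f=\sum_{k\ge1}f_kt^k$ in $\mathbb D[[t]]$ with $g_0,f_1$ units, identified with the infinite lower triangular matrices $(d_{n,k})_{n,k\ge0}$, $d_{n,k}=[t^n]g(t)f(t)^k$; the product is matrix multiplication, i.e. $(g_1,f_1)(g_2,f_2)=(g_1\cdot(g_2\circ f_1),\,f_2\circ f_1)$, with identity $(1,t)$. The S-Riordan group $S\mathcal R(\mathbb D)$ is the subgroup of pairs with $g_0=1$ and $f_1=1$ (all 1s on the main diagonal). For $n\ge0$, $TS\mathcal R_n$ denotes the group of $(n+1)\times(n+1)$ matrices $(d_{i,j})_{0\le i,j\le n}$ obtained by truncating the elements of $S\mathcal R(\mathbb D)$ (the image of the truncation homomorphism). Here $\gamma_2(G)$ denotes the commutator subgroup of $G$ (generated by commutators $[x,y]=x^{-1}y^{-1}xy$).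 *)

From HB Require Import structures.
From mathcomp Require Import all_boot all_order all_algebra.
Set Implicit Arguments. Unset Strict Implicit. Unset Printing Implicit Defensive.
Import GRing.Theory.
Local Open Scope ring_scope.

Section Riordan.
Variable R : comUnitRingType.

(* formal power series over R, as coefficient sequences *)
Definition ps := nat -> R.

Definition pmul (a b : ps) : ps := fun n => \sum_(i < n.+1) a i * b (n - i)%N.
Definition pone : ps := fun n => (n == 0%N)%:R.
Definition pt : ps := fun n => (n == 1%N)%:R.
Definition ppow (f : ps) (k : nat) : ps := iter k (pmul f) pone.
(* composition g o f (meaningful when f 0 = 0) *)
Definition pcomp (g f : ps) : ps := fun n => \sum_(k < n.+1) g k * ppow f k n.

Definition rpair := (ps * ps)%type.
Definition rmul (x y : rpair) : rpair := (pmul x.1 (pcomp y.1 x.2), pcomp y.2 x.2).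
Definition rid : rpair := (pone, pt).

Definition inSR (x : rpair) : Prop := x.1 0%N = 1 /\ x.2 0%N = 0 /\ x.2 1%N = 1.

Definition is_inv_SR (x xi : rpair) : Prop :=
  inSR xi /\ rmul x xi = rid /\ rmul xi x = rid.

Definition is_comm_SR (x y c : rpair) : Prop :=
  inSR x /\ inSR y /\
  exists xi yi, is_inv_SR x xi /\ is_inv_SR y yi /\
                c = rmul (rmul (rmul xi yi) x) y.

Definition in_gamma2_SR (a : rpair) : Prop :=
  exists (m : nat) (c : nat -> rpair),
    (forall i, (i < m)%N -> exists x y, is_comm_SR x y (c i)) /\
    a = foldr (fun i acc => rmul (c i) acc) rid (iota 0 m).

Definition a_elt (k : nat) (alpha : R) : rpair :=
  (fun m => (m == 0%N)%:R + (if m == k then alpha else 0), pt).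

Definition trunc (n : nat) (x : rpair) : 'M[R]_n.+1 :=
  \matrix_(i < n.+1, j < n.+1) pmul x.1 (ppow x.2 j) i.

Definition inTSR (n : nat) (M : 'M[R]_n.+1) : Prop :=
  exists x, inSR x /\ M = trunc n x.

Definition mxcomm (n : nat) (A B : 'M[R]_n.+1) : 'M[R]_n.+1 :=
  invmx A *m invmx B *m A *m B.

Definition in_gamma2_TSR (n : nat) (M : 'M[R]_n.+1) : Prop :=
  exists (m : nat) (xs ys : nat -> 'M[R]_n.+1),
    (forall i, (i < m)%N -> inTSR (xs i) /\ inTSR (ys i)) /\
    M = foldr (fun i acc => mxcomm (xs i) (ys i) *m acc) 1%:M (iota 0 m).

End Riordan.

(* For k >= 2 the polynomial P = t + alpha t^k (1 + t) satisfies P_0 = 0, P_1 = 1, so it has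
   a compositional inverse f, and 1 + P = (1 + t)(1 + alpha t^k).  With x = (1 + t, t) and
   y = (1, f) this gives x^-1 y^-1 x y = ((1 + P)/(1 + t), f o P) = (1 + alpha t^k, t).
   Identities between power series are checked on polynomial truncations: [approx n a P]
   says that the series a and the polynomial P agree up to degree n.
   Conversely, the first two rows of an element of TSR_n are (1, 0, ...) and (c, 1, 0, ...),
   and c is additive under products of such matrices; hence c = 0 on gamma_2(TSR_n), while
   c = alpha for the truncation of a_1(alpha). *)

From HB Require Import structures.
From mathcomp Require Import all_boot all_order all_algebra zify ring.
From Stdlib Require Import FunctionalExtensionality.
Import GRing.Theory.
Local Open Scope ring_scope.

Section SeriesApprox.
Context {R : comUnitRingType}.
Implicit Types (a b f g : ps R) (P Q F G : {poly R}) (x y : rpair R).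

Definition series P : ps R := fun i => P`_i.

Definition approx n a P := forall i, (i <= n)%N -> a i = P`_i.

Definition eq_upto n P Q := forall i, (i <= n)%N -> P`_i = Q`_i.

Lemma approx_series n P : approx n (series P) P. Proof. by []. Qed.

Lemma approx_truncp n a : approx n a (\poly_(i < n.+1) a i).
Proof. by move=> i hi; rewrite coef_poly ltnS hi. Qed.

Lemma approx_eq_upto {n a P Q} : approx n a P -> eq_upto n P Q -> approx n a Q.
Proof. by move=> hP hPQ i hi; rewrite hP //; apply: hPQ. Qed.

Lemma approx_unique {n a P Q} : approx n a P -> approx n a Q -> eq_upto n P Q.
Proof. by move=> hP hQ i hi; rewrite -hP // hQ. Qed.

Lemma eq_upto_refl n P : eq_upto n P P. Proof. by []. Qed.

Lemma eq_upto_trans {n P Q S} : eq_upto n P Q -> eq_upto n Q S -> eq_upto n P S.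
Proof. by move=> hPQ hQS i hi; rewrite hPQ // hQS. Qed.

Lemma eq_upto_le {m n P Q} : (m <= n)%N -> eq_upto n P Q -> eq_upto m P Q.
Proof. by move=> hmn h i hi; apply: h; rewrite (leq_trans hi hmn). Qed.

Lemma eq_uptoD {n P Q P' Q'} :
  eq_upto n P P' -> eq_upto n Q Q' -> eq_upto n (P + Q) (P' + Q').
Proof. by move=> hP hQ i hi; rewrite !coefD hP // hQ. Qed.

Lemma eq_uptoN {n P Q} : eq_upto n P Q -> eq_upto n (- P) (- Q).
Proof. by move=> h i hi; rewrite !coefN h. Qed.

Lemma ps_ext_approx {a b} : (forall n, exists P, approx n a P /\ approx n b P) -> a = b.
Proof.
move=> h; apply: functional_extensionality => n.
by have [P [ha hb]] := h n; rewrite ha // hb.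
Qed.

Lemma approx_pmul {n a b P Q} : approx n a P -> approx n b Q -> approx n (pmul a b) (P * Q).
Proof.
move=> ha hb i hi; rewrite /pmul coefM; apply: eq_bigr => -[j hj] _ /=.
by rewrite ha ?hb //; lia.
Qed.

Lemma approx_pone n : approx n (pone R) 1.
Proof. by move=> i _; rewrite coef1. Qed.

Lemma approx_pt n : approx n (pt R) 'X.
Proof. by move=> i _; rewrite coefX. Qed.

Lemma approx_ppow {n f F} k : approx n f F -> approx n (ppow f k) (F ^+ k).
Proof.
move=> hf; elim: k => [|k IH]; first exact: approx_pone.
by rewrite exprS /ppow iterS; apply: approx_pmul.
Qed.

Lemma coef_exp_low F k i : F`_0 = 0 -> (i < k)%N -> (F ^+ k)`_i = 0.
Proof.
move=> F0; elim: k i => [//|k IH] i hi; rewrite exprS coefM.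
apply: big1 => -[[|j] hj] _ /=; first by rewrite F0 mul0r.
by rewrite IH ?mulr0 //; lia.
Qed.

Lemma approx_pcomp {n g f G F} : approx n g G -> approx n f F -> F`_0 = 0 ->
  approx n (pcomp g f) (G \Po F).
Proof.
move=> hg hf F0 i hi; rewrite /pcomp coef_comp_poly.
set N := maxn (size G) i.+1.
rewrite (big_ord_widen N (fun k => g k * ppow f k i)) ?leq_maxr //.
rewrite (big_ord_widen N (fun k => G`_k * (F ^+ k)`_i)) ?leq_maxl //.
rewrite big_mkcond [RHS]big_mkcond /=; apply: eq_bigr => -[k hk] _ /=.
case: (ltnP k i.+1) => hki; last by rewrite coef_exp_low ?mulr0 ?if_same.
rewrite hg -?(approx_ppow k hf) //; last by lia.
by case: ltnP => // hs; rewrite nth_default ?mul0r.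
Qed.

Lemma eq_uptoM {n P Q P' Q'} :
  eq_upto n P P' -> eq_upto n Q Q' -> eq_upto n (P * Q) (P' * Q').
Proof.
move=> hP hQ; apply: (approx_unique (approx_pmul (approx_series n P) (approx_series n Q))).
by apply: approx_pmul; apply: approx_eq_upto; [exact: approx_series| |exact: approx_series|].
Qed.

Lemma eq_upto_comp {n P Q P' Q'} : eq_upto n P P' -> eq_upto n Q Q' ->
  Q`_0 = 0 -> Q'`_0 = 0 -> eq_upto n (P \Po Q) (P' \Po Q').
Proof.
move=> hP hQ Q0 Q'0.
apply: (approx_unique (approx_pcomp (approx_series n P) (approx_series n Q) Q0)).
apply: approx_pcomp => //; apply: approx_eq_upto; by [exact: approx_series|].
Qed.

Lemma eq_uptoM_contract {n P Q P' Q'} : eq_upto n P P' -> eq_upto n Q Q' ->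
  P`_0 = 0 -> P'`_0 = 0 -> Q`_0 = 0 -> Q'`_0 = 0 -> eq_upto n.+1 (P * Q) (P' * Q').
Proof.
move=> hP hQ P0 P'0 Q0 Q'0 i hi; rewrite !coefM; apply: eq_bigr => -[[|j] hj] _ /=.
  by rewrite P0 P'0 !mul0r.
have [hjn | hnj] := ltnP j n.
  by rewrite hP ?hQ //; lia.
have -> : (i - j.+1 = 0)%N by lia.
by rewrite Q0 Q'0 !mulr0.
Qed.

Lemma coef0_comp G F : F`_0 = 0 -> (G \Po F)`_0 = G`_0.
Proof.
move=> F0; rewrite -(approx_pcomp (approx_series 0 G) (approx_series 0 F) F0) //.
by rewrite /pcomp big_ord1 mulr1.
Qed.

Lemma comp_poly1 F : 1 \Po F = 1.
Proof. by rewrite -polyC1 comp_polyC. Qed.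

Definition approx2 n x G F := approx n x.1 G /\ approx n x.2 F.

Lemma approx2_pair {n g f G F} : approx n g G -> approx n f F -> approx2 n (g, f) G F.
Proof. by []. Qed.

Lemma approx2_eq_upto {n x G F G' F'} :
  approx2 n x G F -> eq_upto n G G' -> eq_upto n F F' -> approx2 n x G' F'.
Proof.
by move=> [hG hF] eG eF; split; [apply: approx_eq_upto eG | apply: approx_eq_upto eF].
Qed.

Lemma approx2_rid n : approx2 n (rid R) 1 'X.
Proof. by split; [apply: approx_pone | apply: approx_pt]. Qed.

Lemma approx2_rmul {n x y G1 F1 G2 F2} : approx2 n x G1 F1 -> approx2 n y G2 F2 ->
  F1`_0 = 0 -> approx2 n (rmul x y) (G1 * (G2 \Po F1)) (F2 \Po F1).
Proof.
move=> [hG1 hF1] [hG2 hF2] F10; split; last exact: approx_pcomp.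
by apply: approx_pmul => //; apply: approx_pcomp.
Qed.

Lemma rpair_ext_approx {x y} :
  (forall n, exists G F, approx2 n x G F /\ approx2 n y G F) -> x = y.
Proof.
case: x y => [g f] [g' f'] h; congr pair; apply: ps_ext_approx => n.
  by have [G [F [[hg _] [hg' _]]]] := h n; exists G.
by have [G [F [[_ hf] [_ hf']]]] := h n; exists F.
Qed.

Lemma pcomp0 g f : pcomp g f 0 = g 0%N.
Proof. by rewrite /pcomp big_ord1 mulr1. Qed.

Lemma rmulr_rid {x} : x.2 0%N = 0 -> rmul x (rid R) = x.
Proof.
case: x => g f /= f0; apply: rpair_ext_approx => n.
have hx := approx2_pair (approx_truncp n g) (approx_truncp n f).
have F0 : (\poly_(i < n.+1) f i)`_0 = 0 by rewrite coef_poly.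
exists (\poly_(i < n.+1) g i), (\poly_(i < n.+1) f i); split=> //.
have := approx2_rmul hx (approx2_rid n) F0.
by rewrite comp_polyC mulr1 comp_polyX.
Qed.
End SeriesApprox.

Section CompositionalInverse.
Context {R : comUnitRingType} (P : {poly R}).
Hypotheses (P0 : P`_0 = 0) (P1 : P`_1 = 1).
Implicit Types (F G H : {poly R}).

Let h := P - 'X.

Lemma split_linear_part : P = 'X + h.
Proof. by rewrite /h addrC subrK. Qed.

Lemma nonlinear_part_factor : h = 'X * ('X * drop_poly 2 h).
Proof.
have low : take_poly 2 h = 0.
  apply/polyP => -[|[|i]]; rewrite coef_take_poly coef0 // /h coefB coefX.
    by rewrite P0 subr0.
  by rewrite P1 subrr.
by rewrite -{1}(poly_take_drop 2 h) low add0r mulrA -expr2 mulrC.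
Qed.

Lemma nonlinear_part_contract {j F G} : eq_upto j F G -> F`_0 = 0 -> G`_0 = 0 ->
  eq_upto j.+1 (h \Po F) (h \Po G).
Proof.
move=> hFG F0 G0; rewrite nonlinear_part_factor !comp_polyM !comp_polyX.
have hq := eq_upto_comp (eq_upto_refl j (drop_poly 2 h)) hFG F0 G0.
apply: eq_uptoM_contract => //; first exact: eq_uptoM.
  by rewrite coef0M F0 mul0r.
by rewrite coef0M G0 mul0r.
Qed.

(* Fixed points of [inv_step] are right inverses of P; each step gains one degree of
   precision, so the i-th coefficient of [inv_iter m] is constant for m >= i. *)
Definition inv_step F := 'X - (h \Po F).
Definition inv_iter m := iter m inv_step 0.
Definition comp_inv : ps R := fun i => (inv_iter i)`_i.

Lemma inv_iter_coef0 m : (inv_iter m)`_0 = 0.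
Proof.
elim: m => [|m IH]; first by rewrite coef0.
by rewrite /inv_iter iterS /inv_step coefB coefX coef0_comp // /h coefB P0 coefX subrr subr0.
Qed.

Lemma inv_step_contract {j F G} : eq_upto j F G -> F`_0 = 0 -> G`_0 = 0 ->
  eq_upto j.+1 (inv_step F) (inv_step G).
Proof.
move=> hFG F0 G0; apply: eq_uptoD; first exact: eq_upto_refl.
exact/eq_uptoN/nonlinear_part_contract.
Qed.

Lemma inv_iter_step j : eq_upto j (inv_iter j) (inv_iter j.+1).
Proof.
elim: j => [|j IH]; first by case=> // _; rewrite !inv_iter_coef0.
exact: inv_step_contract IH (inv_iter_coef0 _) (inv_iter_coef0 _).
Qed.

Lemma inv_iter_stable {j m} : (j <= m)%N -> eq_upto j (inv_iter j) (inv_iter m).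
Proof.
move/subnKC <-; elim: (m - j)%N => [|d IH]; first by rewrite addn0.
apply: eq_upto_trans IH _; rewrite addnS.
by apply: (eq_upto_le (leq_addr d j)); apply: inv_iter_step.
Qed.

Lemma approx_comp_inv n : approx n comp_inv (inv_iter n).
Proof. by move=> i hi; apply: inv_iter_stable. Qed.

Lemma comp_inv_right n : eq_upto n (P \Po inv_iter n) 'X.
Proof.
have -> : P \Po inv_iter n = 'X + (inv_iter n - inv_iter n.+1).
  by rewrite {1}split_linear_part comp_polyD comp_polyX /inv_iter iterS /inv_step; ring.
by move=> i hi; rewrite coefD coefB inv_iter_step // subrr addr0.
Qed.

Lemma comp_inv_left n : eq_upto n (inv_iter n \Po P) 'X.
Proof.
set H := inv_iter n \Po P.
have hPH : eq_upto n (P \Po H) P.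
  rewrite /H comp_polyA -[X in eq_upto _ _ X]comp_polyX.
  by apply: eq_upto_comp => //; exact: comp_inv_right.
have H0 : H`_0 = 0 by rewrite coef0_comp ?inv_iter_coef0.
suff : forall j, (j <= n)%N -> eq_upto j H 'X by apply.
elim=> [_ | j IH hj]; first by case=> // _; rewrite H0 coefX.
have -> : H = P \Po H - (h \Po H) by rewrite split_linear_part comp_polyD comp_polyX addrK.
have -> : 'X = P - (h \Po 'X) :> {poly R} by rewrite comp_polyXr split_linear_part addrK.
apply: eq_uptoD; first exact: eq_upto_le hPH.
by apply/eq_uptoN/nonlinear_part_contract; rewrite ?coefX //; apply/IH/ltnW.
Qed.

Lemma comp_inverse_SR :
  exists f, inSR (pone R, f) /\ is_inv_SR (pone R, f) (pone R, series P).
Proof.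
exists comp_inv; split.
  split=> //; split; first exact: inv_iter_coef0.
  by rewrite /comp_inv /= coefB coefX comp_poly0r coefC subr0.
split; first by split=> //; split.
have hy n := approx2_pair (approx_pone n) (approx_comp_inv n).
have hyi n := approx2_pair (approx_pone n) (approx_series n P).
split; apply: rpair_ext_approx => n; exists 1, 'X; split; try exact: approx2_rid.
  have := approx2_rmul (hy n) (hyi n) (inv_iter_coef0 n); rewrite comp_poly1 mul1r.
  by move/approx2_eq_upto; apply; [exact: eq_upto_refl | exact: comp_inv_right].
have := approx2_rmul (hyi n) (hy n) P0; rewrite comp_poly1 mul1r.
by move/approx2_eq_upto; apply; [exact: eq_upto_refl | exact: comp_inv_left].
Qed.
End CompositionalInverse.

Lemma comm_in_gamma2_SR {R : comUnitRingType} (x y c : rpair R) :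
  is_comm_SR x y c -> in_gamma2_SR c.
Proof.
move=> hc; have c20 : c.2 0%N = 0.
  by case: hc => _ [[_ [y20 _]] [xi [yi [_ [_ ->]]]]]; rewrite /= pcomp0.
exists 1%N, (fun=> c); split; first by move=> i _; exists x, y.
by rewrite /= rmulr_rid.
Qed.

Section Commutator.
Context {R : comUnitRingType}.

Definition geom : ps R := fun i => (-1) ^+ i.

Lemma X_coef0 : ('X : {poly R})`_0 = 0.
Proof. by rewrite coefX. Qed.

Lemma geom_inverse n : eq_upto n ((1 + 'X) * \poly_(i < n.+1) geom i) 1.
Proof.
move=> i hi; rewrite mulrDl mul1r coefD coefXM coef1 !coef_poly ltnS hi.
case: i hi => [|i] hi /=; first by rewrite addr0.
by rewrite ltnS (ltnW hi) /geom exprS mulN1r addNr.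
Qed.

Lemma is_inv_SR_geom : is_inv_SR (series (1 + 'X), pt R) (geom, pt R).
Proof.
have hx n := approx2_pair (approx_series n (1 + 'X : {poly R})) (approx_pt n).
have hxi n := approx2_pair (approx_truncp n geom) (approx_pt n).
split; first by split; rewrite /= ?expr0.
split; apply: rpair_ext_approx => n; exists 1, 'X; split; try exact: approx2_rid.
  have := approx2_rmul (hx n) (hxi n) X_coef0; rewrite !comp_polyXr.
  by move/approx2_eq_upto; apply; [exact: geom_inverse | exact: eq_upto_refl].
have := approx2_rmul (hxi n) (hx n) X_coef0; rewrite !comp_polyXr mulrC.
by move/approx2_eq_upto; apply; [exact: geom_inverse | exact: eq_upto_refl].
Qed.

Lemma a_elt_series k (alpha : R) : a_elt k alpha = (series (1 + alpha *: 'X^k), pt R).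
Proof.
congr pair; apply: functional_extensionality => i.
by rewrite /series coefD coef1 coefZ coefXn; case: (i == k); rewrite ?mulr1 ?mulr0.
Qed.

Lemma commutator_comp_inverse (P G : {poly R}) f : P`_0 = 0 -> 1 + P = (1 + 'X) * G ->
  rmul (pone R, series P) (pone R, f) = rid R ->
  rmul (rmul (rmul (geom, pt R) (pone R, series P)) (series (1 + 'X), pt R)) (pone R, f)
  = (series G, pt R).
Proof.
move=> P0 PG Pf; apply: rpair_ext_approx => n; exists G, 'X.
split; last by split; [exact: approx_series | exact: approx_pt].
have hy := approx2_pair (approx_pone n) (approx_truncp n f).
have hyi := approx2_pair (approx_pone n) (approx_series n P).
have hf : eq_upto n ((\poly_(i < n.+1) f i) \Po P) 'X.
  have := approx2_rmul hyi hy P0.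
  by rewrite Pf => -[_ h]; exact: approx_unique h (approx_pt n).
have h1 := approx2_rmul (approx2_pair (approx_truncp n geom) (approx_pt n)) hyi X_coef0.
rewrite !comp_polyXr mulr1 in h1.
have h2 := approx2_rmul h1 (approx2_pair (approx_series n (1 + 'X)) (approx_pt n)) P0.
rewrite comp_polyX in h2.
have h3 := approx2_rmul h2 hy P0.
rewrite comp_poly1 mulr1 comp_polyD comp_poly1 comp_polyX PG mulrA in h3.
apply: approx2_eq_upto h3 _ hf; rewrite -[X in eq_upto _ _ X]mul1r.
by apply: eq_uptoM; [rewrite mulrC; exact: geom_inverse | exact: eq_upto_refl].
Qed.

Lemma a_elt_commutator (alpha : R) k : (2 <= k)%N ->
  exists x y, is_comm_SR x y (a_elt k alpha).
Proof.
move=> hk; set P : {poly R} := 'X + alpha *: ('X^k * (1 + 'X)).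
have P0 : P`_0 = 0 by rewrite coefD coefX coefZ coefXnM (ltnW hk) mulr0 addr0.
have P1 : P`_1 = 1 by rewrite coefD coefX coefZ coefXnM hk mulr0 addr0.
have [f [yS [yiS [yyi yiy]]]] := comp_inverse_SR P P0 P1.
exists (series (1 + 'X), pt R), (pone R, f); split.
  by rewrite /inSR /series /= coefD coef1 coefX addr0.
split=> //; exists (geom, pt R), (pone R, series P); split; first exact: is_inv_SR_geom.
split=> //; rewrite a_elt_series; apply/esym/commutator_comp_inverse => //.
by rewrite /P -!mul_polyC; ring.
Qed.
End Commutator.

Section TruncatedMatrices.
Context {R : comUnitRingType}.
Implicit Types (f g h : ps R) (x : rpair R).

Lemma coef_exp_diag (F : {poly R}) j : F`_0 = 0 -> (F ^+ j)`_j = F`_1 ^+ j.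
Proof.
move=> F0; elim: j => [|j IH]; first by rewrite !expr0 coef1.
rewrite exprS coefM big_ord_recl F0 mul0r add0r big_ord_recl /= subSS subn0 IH.
rewrite big1 ?addr0 -?exprS // => -[l hl] _ /=.
by rewrite coef_exp_low ?mulr0 //; rewrite /bump /=; lia.
Qed.

Lemma ppow_low f j i : f 0%N = 0 -> (i < j)%N -> ppow f j i = 0.
Proof.
move=> f0 hij; rewrite (approx_ppow j (approx_truncp i f)) // coef_exp_low //.
by rewrite coef_poly.
Qed.

Lemma ppow_diag f j : f 0%N = 0 -> f 1%N = 1 -> ppow f j j = 1.
Proof.
move=> f0 f1; rewrite (approx_ppow j (approx_truncp j f)) // coef_exp_diag.
  by case: j => [|j]; rewrite ?expr0 // coef_poly f1 expr1n.
by rewrite coef_poly.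
Qed.

Lemma pmul_low g h j i : (forall m, (m < j)%N -> h m = 0) -> (i < j)%N -> pmul g h i = 0.
Proof. by move=> hl hij; rewrite /pmul big1 // => l _; rewrite hl ?mulr0 //; lia. Qed.

Lemma pmul_diag g h j : (forall m, (m < j)%N -> h m = 0) -> pmul g h j = g 0%N * h j.
Proof.
move=> hl; rewrite /pmul big_ord_recl subn0 big1 ?addr0 // => -[l hlj] _.
by rewrite hl ?mulr0 //= /bump /=; lia.
Qed.

Lemma pmulr1 g : pmul g (pone R) = g.
Proof.
apply: ps_ext_approx => n; exists (\poly_(i < n.+1) g i); split; last exact: approx_truncp.
by rewrite -[X in approx _ _ X]mulr1; apply/approx_pmul/approx_pone/approx_truncp.
Qed.

Lemma trunc_col0 n x (i : 'I_n.+1) : trunc n x i ord0 = x.1 i.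
Proof. by rewrite mxE pmulr1. Qed.

Lemma trunc_trig n x : inSR x -> is_trig_mx (trunc n x).
Proof.
case=> _ [f0 _]; apply/is_trig_mxP => i j hij; rewrite mxE.
by apply: (pmul_low _ _ j) => // m hm; apply: ppow_low.
Qed.

Lemma trunc_diag n x (i : 'I_n.+1) : inSR x -> trunc n x i i = 1.
Proof.
case=> g0 [f0 f1]; rewrite mxE (pmul_diag _ _ i) ?g0 ?ppow_diag ?mul1r //.
by move=> m hm; apply: ppow_low.
Qed.
End TruncatedMatrices.

Section SubdiagonalEntry.
Context {R : comUnitRingType} {n : nat}.
Local Notation N := n.+2.
Local Notation i1 := (@Ordinal N 1 isT).
Implicit Types (A B : 'M[R]_N) (a b c : R).

(* Rows of [A *m B] only depend on the rows of A, so c is additive along products. *)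
Definition unitrig01 c A :=
  row ord0 A = row ord0 1%:M /\ row i1 A = c *: row ord0 1%:M + row i1 1%:M.

Lemma unitrig01_entry {c A} : unitrig01 c A -> A i1 ord0 = c.
Proof.
by case=> _ /(congr1 (fun v : 'rV_N => v 0 ord0)); rewrite !mxE eqxx mulr1 /= addr0.
Qed.

Lemma unitrig01_1 : unitrig01 0 1%:M.
Proof. by split; rewrite // scale0r add0r. Qed.

Lemma unitrig01_mul {a b A B} : unitrig01 a A -> unitrig01 b B -> unitrig01 (a + b) (A *m B).
Proof.
move=> [hA0 hA1] [hB0 hB1]; split; first by rewrite row_mul hA0 -row_mul mul1mx.
by rewrite row_mul hA1 mulmxDl -scalemxAl -!row_mul !mul1mx hB0 hB1 addrA scalerDl.
Qed.

Lemma unitrig01_inv {a A} : A \in unitmx -> unitrig01 a A -> unitrig01 (- a) (invmx A).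
Proof.
move=> uA [hA0 hA1]; have hAV := mulmxV uA.
have r0 : row ord0 (invmx A) = row ord0 1%:M.
  by rewrite -[RHS](congr1 (row ord0) hAV) row_mul hA0 -row_mul mul1mx.
split=> //; have := congr1 (row i1) hAV.
rewrite row_mul hA1 mulmxDl -scalemxAl -!row_mul !mul1mx r0 => <-.
by rewrite addrA scaleNr addNr add0r.
Qed.

Lemma unitrig01_mxcomm {a b A B} : A \in unitmx -> B \in unitmx ->
  unitrig01 a A -> unitrig01 b B -> unitrig01 0 (mxcomm A B).
Proof.
move=> uA uB hA hB.
have hAB := unitrig01_mul (unitrig01_inv uA hA) (unitrig01_inv uB hB).
have := unitrig01_mul (unitrig01_mul hAB hA) hB.
by have -> : - a + - b + a + b = 0 by ring.
Qed.

Lemma unitrig_unitrig01 {A} : is_trig_mx A -> (forall i, A i i = 1) -> unitrig01 (A i1 ord0) A.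
Proof.
move=> /is_trig_mxP lowA diagA; split; apply/rowP => -[j hj]; rewrite !mxE.
  case: j hj => [|j] hj; last by rewrite lowA.
  by rewrite (_ : Ordinal hj = ord0) ?diagA //; apply: val_inj.
case: j hj => [|[|j]] hj.
- by rewrite (_ : Ordinal hj = ord0) ?mulr1 ?addr0 //; apply: val_inj.
- by rewrite (_ : Ordinal hj = i1) ?diagA ?mulr0 ?add0r //; apply: val_inj.
- by rewrite lowA // mulr0 add0r.
Qed.

Lemma unitrig_unitmx {A} : is_trig_mx A -> (forall i, A i i = 1) -> A \in unitmx.
Proof.
by move=> lowA diagA; rewrite unitmxE det_trig // big1 ?unitr1.
Qed.

Lemma inTSR_unitrig01 {M} : inTSR M -> M \in unitmx /\ unitrig01 (M i1 ord0) M.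
Proof.
case=> x [hx ->]; have lowT := trunc_trig n.+1 x hx; have diagT i := trunc_diag n.+1 x i hx.
by split; [apply: unitrig_unitmx | apply: unitrig_unitrig01].
Qed.

Lemma gamma2_TSR_unitrig01 {M} : in_gamma2_TSR M -> unitrig01 0 M.
Proof.
case=> m [xs [ys [hxy ->]]].
suff : forall s, {subset s <= iota 0 m} ->
  unitrig01 0 (foldr (fun i acc => mxcomm (xs i) (ys i) *m acc) 1%:M s) by apply.
elim=> [_ | i s IH sub] /=; first exact: unitrig01_1.
have [hx hy] : inTSR (xs i) /\ inTSR (ys i).
  by apply: hxy; have := sub i (mem_head _ _); rewrite mem_iota.
have [ux tx] := inTSR_unitrig01 hx; have [uy ty] := inTSR_unitrig01 hy.
rewrite -[0 : R]addr0; apply: unitrig01_mul; first exact: unitrig01_mxcomm tx ty.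
by apply: IH => j hj; apply: sub; rewrite inE hj orbT.
Qed.
End SubdiagonalEntry.

Theorem lemma1 (R : comUnitRingType) :
  (forall (alpha : R) (k : nat), (2 <= k)%N -> in_gamma2_SR (a_elt k alpha)) /\
  (forall (n : nat) (alpha : R), (1 <= n)%N -> alpha != 0 ->
     ~ in_gamma2_TSR (trunc n (a_elt 1 alpha))).
Proof.
split=> [alpha k hk | [//|n] alpha _ alpha_neq0].
  by have [x [y hc]] := a_elt_commutator alpha k hk; apply: comm_in_gamma2_SR hc.
move/gamma2_TSR_unitrig01/unitrig01_entry; rewrite trunc_col0 /= add0r => alpha0.
by rewrite alpha0 eqxx in alpha_neq0.
Qed.
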